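(* Let $\zeta_3=\int_0^\infty \frac{\mathrm{d}t}{\sqrt{1+t^6}}$ and let $\mathrm{sleafh}_3:(-\zeta_3,\zeta_3)\to\mathbb{R}$ be the hyperbolic leaf function of basis $3$. For every $l\in(-\zeta_3,\zeta_3)$, writing $S=\mathrm{sleafh}_3(l)$, $$\Bigl(\mathrm{sleafh}_3\Bigl(\frac l2\Bigr)\Bigr)^2=-\frac12S^2-\frac12\sqrt{1-S^2+S^4}+\frac12\sqrt{-1+S^2+2S^4+\frac{2+2S^6}{\sqrt{1-S^2+S^4}}}.$$
   Context: For a natural number $n$, let $\zeta_n=\int_0^\infty \frac{\mathrm{d}t}{\sqrt{1+t^{2n}}}$. The hyperbolic leaf function $\mathrm{sleafh}_n$ is the solution $r(l)$ on $(-\zeta_n,\zeta_n)$ of $\frac{\mathrm{d}^2r}{\mathrm{d}l^2}=n\,r^{2n-1}$ with $r(0)=0$, $r'(0)=1$; equivalently it is the inverse function of $r\mapsto \int_0^r \frac{\mathrm{d}t}{\sqrt{1+t^{2n}}}$, $r\in\mathbb{R}$. *)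

From Stdlib Require Import Reals ClassicalEpsilon.
From Coquelicot Require Import Coquelicot.
Open Scope R_scope.

Definition leaf_int (n : nat) (r : R) : R :=
  RInt (fun t => / sqrt (1 + t ^ (2 * n))) 0 r.

Definition zeta (n : nat) : R := real (Lim (fun b => leaf_int n b) p_infty).

(* sleafh_n = inverse function of r |-> leaf_int n r (which is strictly
   increasing, so for l in (-zeta_n, zeta_n) the chosen r is the unique one). *)
Definition sleafh (n : nat) (l : R) : R :=
  epsilon (inhabits 0) (fun r => leaf_int n r = l).

(** F(r) = ∫_0^r dt/√(1+t^6) satisfies the duplication formula F(D t) = 2 F(t) with
    D(t) = 2t √((1+t^6)/(1-8t^6)) for 8t^6 < 1: both sides vanish at 0 and have the same
    derivative, because (1-8u)^3 + 64u(1+u)^3 = (1+20u-8u^2)^2.  For any S, the right-hand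
    side x of the theorem is the root in [0,1/2) of S^2 (1-8x^3) = 4x(1+x^3), i.e. of
    D(√x)^2 = S^2, so F(S) = 2 F(±√x).  In particular F is bounded, hence ζ_3 is its
    supremum, F maps onto (-ζ_3, ζ_3), and sleafh_3(l/2) = ±√x. *)
From Stdlib Require Import Reals Lra Psatz Classical_Prop ClassicalEpsilon.
From Coquelicot Require Import Coquelicot.
Open Scope R_scope.

Lemma is_derive_0_eq (g : R -> R) a b :
  (forall x, Rmin a b <= x <= Rmax a b -> is_derive g x 0) -> g b = g a.
Proof.
  intro Hg.
  assert (Hcont : forall x, Rmin a b <= x <= Rmax a b -> continuity_pt g x).
  { intros x Hx. apply continuity_pt_filterlim, (@ex_derive_continuous R_AbsRing R_NormedModule).
    exists 0; exact (Hg x Hx). }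
  destruct (MVT_gen g a b (fun _ => 0)) as [c [_ Hc]];
    [intros x Hx; apply Hg; lra | exact Hcont | lra].
Qed.

Lemma is_lub_approx (E : R -> Prop) L l : is_lub E L -> l < L -> exists y, E y /\ l < y.
Proof.
  intros [_ HL] Hl. apply NNPP. intro Hno.
  enough (L <= l) by lra.
  apply HL. intros y Ey. apply Rnot_lt_le. intro Hy. apply Hno. now exists y.
Qed.

Section LeafIntegral.
Variable n : nat.

Definition leaf_integrand (t : R) : R := / sqrt (1 + t ^ (2 * n)).

Lemma pow_even_ge0 t : 0 <= t ^ (2 * n).
Proof. rewrite pow_mult. apply pow_le, pow2_ge_0. Qed.

Lemma leaf_integrand_gt0 t : 0 < leaf_integrand t.
Proof. apply Rinv_0_lt_compat, sqrt_lt_R0. pose proof (pow_even_ge0 t). lra. Qed.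

Lemma continuous_leaf_integrand t : continuous leaf_integrand t.
Proof.
  apply (@ex_derive_continuous R_AbsRing R_NormedModule). unfold leaf_integrand.
  generalize (pow_even_ge0 t). generalize (2 * n)%nat. intros m Hm. auto_derive.
  assert (0 < sqrt (1 + t ^ m)) by (apply sqrt_lt_R0; lra). repeat split; lra.
Qed.

Lemma is_derive_leaf_int x : is_derive (leaf_int n) x (leaf_integrand x).
Proof.
  apply (is_derive_RInt leaf_integrand (leaf_int n) 0 x); [|apply continuous_leaf_integrand].
  apply filter_forall. intro b.
  apply (@RInt_correct R_CompleteNormedModule), (@ex_RInt_continuous R_CompleteNormedModule).
  intros; apply continuous_leaf_integrand.
Qed.

Lemma continuity_pt_leaf_int x : continuity_pt (leaf_int n) x.
Proof.
  apply continuity_pt_filterlim, (@ex_derive_continuous R_AbsRing R_NormedModule).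
  eexists; apply is_derive_leaf_int.
Qed.

Lemma leaf_int_0 : leaf_int n 0 = 0.
Proof. apply (@RInt_point R_CompleteNormedModule). Qed.

Lemma leaf_int_lt a b : a < b -> leaf_int n a < leaf_int n b.
Proof.
  intro Hab.
  destruct (MVT_gen (leaf_int n) a b leaf_integrand) as [c [_ Hc]].
  - intros; apply is_derive_leaf_int.
  - intros; apply continuity_pt_leaf_int.
  - pose proof (leaf_integrand_gt0 c). nra.
Qed.

Lemma leaf_int_inj a b : leaf_int n a = leaf_int n b -> a = b.
Proof.
  intro H. destruct (Rtotal_order a b) as [Hab|[Hab|Hab]]; [|exact Hab|];
    apply leaf_int_lt in Hab; lra.
Qed.

Lemma leaf_int_opp r : leaf_int n (- r) = - leaf_int n r.
Proof.
  enough (leaf_int n (- r) + leaf_int n r = leaf_int n (- 0) + leaf_int n 0)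
    by (rewrite Ropp_0, leaf_int_0 in *; lra).
  apply (is_derive_0_eq (fun r => leaf_int n (- r) + leaf_int n r)). intros x _.
  replace 0 with (-1 * leaf_integrand (- x) + leaf_integrand x).
  - apply (is_derive_plus (fun r => leaf_int n (- r))); [|apply is_derive_leaf_int].
    apply (is_derive_comp (leaf_int n) (fun r => - r)); [apply is_derive_leaf_int|].
    apply (is_derive_opp (fun r => r) x 1), (is_derive_id x).
  - unfold leaf_integrand. rewrite !pow_mult. replace ((- x) ^ 2) with (x ^ 2) by ring. ring.
Qed.

Lemma sleafh_leaf_int r : sleafh n (leaf_int n r) = r.
Proof.
  apply leaf_int_inj. apply (epsilon_spec (inhabits 0) (fun s => leaf_int n s = leaf_int n r)).
  now exists r.
Qed.

Section Bounded.
Hypothesis leaf_int_bounded : exists M, forall r, leaf_int n r <= M.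

Lemma is_lub_zeta : is_lub (fun y => exists r, y = leaf_int n r) (zeta n).
Proof.
  destruct (completeness (fun y => exists r, y = leaf_int n r)) as [L HL].
  - destruct leaf_int_bounded as [M HM]. exists M. intros y [r ->]. apply HM.
  - now exists (leaf_int n 0), 0.
  - enough (Hlim : is_lim (leaf_int n) p_infty L)
      by (unfold zeta; now rewrite (is_lim_unique (fun b => leaf_int n b) _ _ Hlim)).
    apply is_lim_spec. intro eps.
    destruct (is_lub_approx _ _ (L - eps) HL) as [y [[b ->] Hb]]; [destruct eps; simpl; lra|].
    exists b. intros r Hr.
    assert (leaf_int n b < leaf_int n r) by (apply leaf_int_lt; lra).
    assert (leaf_int n r <= L) by (apply HL; now exists r).
    apply Rabs_def1; lra.
Qed.

Lemma leaf_int_surj l : - zeta n < l < zeta n -> exists r, leaf_int n r = l.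
Proof.
  assert (Hnonneg : forall l, 0 <= l < zeta n -> exists r, leaf_int n r = l).
  { intros l' Hl'.
    destruct (is_lub_approx _ _ l' is_lub_zeta) as [y [[b ->] Hb]]; [lra|].
    destruct (IVT_gen (leaf_int n) 0 b l') as [r [_ Hr]]; [exact continuity_pt_leaf_int| |now exists r].
    rewrite leaf_int_0. split.
    - apply Rle_trans with 0; [apply Rmin_l|lra].
    - apply Rle_trans with (leaf_int n b); [lra|apply Rmax_r]. }
  intro Hl. destruct (Rle_dec 0 l); [apply Hnonneg; lra|].
  destruct (Hnonneg (- l)) as [r Hr]; [lra|].
  exists (- r). rewrite leaf_int_opp, Hr. ring.
Qed.

Lemma leaf_int_sleafh l : - zeta n < l < zeta n -> leaf_int n (sleafh n l) = l.
Proof.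
  intro Hl. apply (epsilon_spec (inhabits 0) (fun r => leaf_int n r = l)).
  now apply leaf_int_surj.
Qed.

End Bounded.
End LeafIntegral.

Definition leaf3_dup (t : R) : R := 2 * t * sqrt ((1 + t ^ 6) / (1 - 8 * t ^ 6)).

Definition leaf3_dup_deriv (t : R) : R :=
  2 * (1 + 20 * t ^ 6 - 8 * t ^ 12)
  / ((1 - 8 * t ^ 6) ^ 2 * sqrt ((1 + t ^ 6) / (1 - 8 * t ^ 6))).

Lemma pow6_ge0 t : 0 <= t ^ 6.
Proof. replace (t ^ 6) with ((t ^ 3) ^ 2) by ring. apply pow2_ge_0. Qed.

Lemma is_derive_leaf3_dup t : 8 * t ^ 6 < 1 -> is_derive leaf3_dup t (leaf3_dup_deriv t).
Proof.
  intro Ht. pose proof (pow6_ge0 t) as Hu.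
  assert (Hg : 0 < (1 + t ^ 6) / (1 - 8 * t ^ 6)) by (apply Rdiv_lt_0_compat; lra).
  unfold leaf3_dup. auto_derive; change (t * (t * (t * (t * (t * (t * 1)))))) with (t ^ 6);
    change (1 + - (8 * t ^ 6)) with (1 - 8 * t ^ 6);
    change ((1 + t ^ 6) * / (1 - 8 * t ^ 6)) with ((1 + t ^ 6) / (1 - 8 * t ^ 6)).
  - repeat split; lra.
  - change (t * (t * (t * (t * (t * 1))))) with (t ^ 5).
    unfold leaf3_dup_deriv.
    set (g := (1 + t ^ 6) / (1 - 8 * t ^ 6)) in *.
    assert (Hs : 0 < sqrt g) by (apply sqrt_lt_R0; lra).
    assert (Hs2 : sqrt g ^ 2 = g) by (apply pow2_sqrt; lra).
    set (s := sqrt g) in *. unfold g in Hs2.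
    apply (Rmult_eq_reg_r s); [|lra].
    field_simplify; [|lra..].
    rewrite Hs2. field. split; [nra|lra].
Qed.

Lemma leaf3_dup_deriv_mul t :
  8 * t ^ 6 < 1 -> leaf3_dup_deriv t * leaf_integrand 3 (leaf3_dup t) = 2 * leaf_integrand 3 t.
Proof.
  intro Ht. pose proof (pow6_ge0 t) as Hu.
  unfold leaf_integrand, leaf3_dup_deriv, leaf3_dup. simpl (2 * 3)%nat.
  replace (t ^ 12) with (t ^ 6 * t ^ 6) by ring.
  replace ((2 * t * sqrt ((1 + t ^ 6) / (1 - 8 * t ^ 6))) ^ 6)
    with (64 * t ^ 6 * (sqrt ((1 + t ^ 6) / (1 - 8 * t ^ 6)) ^ 2) ^ 3) by ring.
  assert (Hg : 0 < (1 + t ^ 6) / (1 - 8 * t ^ 6)) by (apply Rdiv_lt_0_compat; lra).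
  assert (Hs2 : sqrt ((1 + t ^ 6) / (1 - 8 * t ^ 6)) ^ 2 = (1 + t ^ 6) / (1 - 8 * t ^ 6))
    by (apply pow2_sqrt; lra).
  assert (Hs : 0 < sqrt ((1 + t ^ 6) / (1 - 8 * t ^ 6))) by (apply sqrt_lt_R0; lra).
  assert (Hp2 : sqrt (1 + t ^ 6) ^ 2 = 1 + t ^ 6) by (apply pow2_sqrt; lra).
  assert (Hp : 0 < sqrt (1 + t ^ 6)) by (apply sqrt_lt_R0; lra).
  set (s := sqrt ((1 + t ^ 6) / (1 - 8 * t ^ 6))) in *.
  set (p := sqrt (1 + t ^ 6)) in *.
  set (u := t ^ 6) in *.
  assert (HN : 0 < 1 + 20 * u - 8 * (u * u)) by nra.
  (* 1 + D(t)^6 = (1 + 20u - 8u^2)^2 / (1 - 8u)^3 *)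
  assert (Hroot : sqrt (1 + 64 * u * (s ^ 2) ^ 3)
                  = (1 + 20 * u - 8 * (u * u)) * p / ((1 - 8 * u) ^ 2 * s)).
  { rewrite <- sqrt_pow2.
    - f_equal. rewrite Hs2.
      replace (((1 + 20 * u - 8 * (u * u)) * p / ((1 - 8 * u) ^ 2 * s)) ^ 2)
        with ((1 + 20 * u - 8 * (u * u)) ^ 2 * p ^ 2 / ((1 - 8 * u) ^ 4 * s ^ 2))
        by (field; lra).
      rewrite Hs2, Hp2. field. lra.
    - apply Rlt_le, Rdiv_lt_0_compat; [nra|]. apply Rmult_lt_0_compat; [nra|lra]. }
  rewrite Hroot. field. repeat split; lra.
Qed.

Lemma leaf_int_3_dup t : 0 <= t -> 8 * t ^ 6 < 1 -> leaf_int 3 (leaf3_dup t) = 2 * leaf_int 3 t.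
Proof.
  intros Ht0 Ht.
  enough (leaf_int 3 (leaf3_dup t) - 2 * leaf_int 3 t
          = leaf_int 3 (leaf3_dup 0) - 2 * leaf_int 3 0)
    by (unfold leaf3_dup in *; rewrite Rmult_0_r, Rmult_0_l, leaf_int_0 in *; lra).
  apply (is_derive_0_eq (fun t => leaf_int 3 (leaf3_dup t) - 2 * leaf_int 3 t)).
  rewrite Rmin_left, Rmax_right by lra. intros x Hx.
  assert (Hx6 : 8 * x ^ 6 < 1) by (assert (x ^ 6 <= t ^ 6) by (apply pow_incr; lra); lra).
  replace 0 with (leaf3_dup_deriv x * leaf_integrand 3 (leaf3_dup x) - 2 * leaf_integrand 3 x)
    by (rewrite leaf3_dup_deriv_mul by exact Hx6; ring).
  apply (is_derive_minus (fun t => leaf_int 3 (leaf3_dup t)) (fun t => 2 * leaf_int 3 t)).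
  - apply (is_derive_comp (leaf_int 3) leaf3_dup); [apply is_derive_leaf_int|].
    now apply is_derive_leaf3_dup.
  - apply (is_derive_scal (leaf_int 3) x 2), is_derive_leaf_int.
Qed.

Lemma nested_radicals_solve_cubic X q w :
  0 <= X -> 0 < q -> q ^ 2 = 1 - X + X ^ 2 ->
  0 <= w -> w ^ 2 = -1 + X + 2 * X ^ 2 + 2 * (1 + X) * q ->
  let x := (- X - q + w) / 2 in
  (0 <= x < 1/2) /\ X * (1 - 8 * x ^ 3) = 4 * x * (1 + x ^ 3).
Proof.
  intros HX Hq Hq2 Hw Hw2 x.
  assert (Hq1 : 1 - X <= q)
    by (destruct (Rle_dec X 1); [apply Rsqr_incr_0_var; unfold Rsqr; nra | lra]).
  assert (Hlo : X + q <= w) by (apply Rsqr_incr_0_var; unfold Rsqr; nra).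
  assert (Hhi : w < X + q + 1) by (apply Rsqr_incrst_0; unfold Rsqr; nra).
  split; [unfold x; lra|].
  (* squaring w = 2x + X + q leaves a relation linear in q; squaring again eliminates q *)
  assert (Hlin : 2 * x ^ 2 + 1 - X * (1 - 2 * x) = (1 - 2 * x) * q) by (unfold x; nra).
  transitivity (4 * x * (1 + x ^ 3) + (1 - 2 * x) ^ 2 * q ^ 2
                - (2 * x ^ 2 + 1 - X * (1 - 2 * x)) ^ 2); [rewrite Hq2; ring|].
  rewrite Hlin. ring.
Qed.

Definition leaf3_half_sq (S : R) : R :=
  - (1/2) * S ^ 2 - (1/2) * sqrt (1 - S ^ 2 + S ^ 4)
  + (1/2) * sqrt (-1 + S ^ 2 + 2 * S ^ 4 + (2 + 2 * S ^ 6) / sqrt (1 - S ^ 2 + S ^ 4)).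

Lemma leaf3_half_sq_spec S :
  let x := leaf3_half_sq S in
  (0 <= x < 1/2) /\ S ^ 2 * (1 - 8 * x ^ 3) = 4 * x * (1 + x ^ 3).
Proof.
  assert (HX : 0 <= S ^ 2) by apply pow2_ge_0.
  assert (Hq2 : sqrt (1 - S ^ 2 + S ^ 4) ^ 2 = 1 - S ^ 2 + S ^ 4) by (apply pow2_sqrt; nra).
  assert (Hq : 0 < sqrt (1 - S ^ 2 + S ^ 4)) by (apply sqrt_lt_R0; nra).
  unfold leaf3_half_sq.
  replace (S ^ 4) with ((S ^ 2) ^ 2) in * by ring.
  replace ((2 + 2 * S ^ 6) / sqrt (1 - S ^ 2 + (S ^ 2) ^ 2))
    with (2 * (1 + S ^ 2) * sqrt (1 - S ^ 2 + (S ^ 2) ^ 2)).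
  2: { field_simplify_eq; [|lra]. rewrite Hq2. ring. }
  set (q := sqrt (1 - S ^ 2 + (S ^ 2) ^ 2)) in *. set (X := S ^ 2) in *.
  replace (- (1/2) * X - (1/2) * q + (1/2) * sqrt (-1 + X + 2 * X ^ 2 + 2 * (1 + X) * q))
    with ((- X - q + sqrt (-1 + X + 2 * X ^ 2 + 2 * (1 + X) * q)) / 2) by field.
  apply nested_radicals_solve_cubic; [lra|lra|lra|apply sqrt_pos|].
  apply pow2_sqrt. nra.
Qed.

Lemma leaf3_dup_sqrt_half_sq S : leaf3_dup (sqrt (leaf3_half_sq S)) = Rabs S.
Proof.
  destruct (leaf3_half_sq_spec S) as [[Hx0 Hx1] HS].
  set (x := leaf3_half_sq S) in *.
  assert (Hx3 : 8 * x ^ 3 < 1) by nra.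
  assert (Ht2 : sqrt x ^ 2 = x) by (apply pow2_sqrt; lra).
  unfold leaf3_dup. replace (sqrt x ^ 6) with ((sqrt x ^ 2) ^ 3) by ring. rewrite Ht2.
  pose proof (sqrt_pos x). pose proof (sqrt_pos ((1 + x ^ 3) / (1 - 8 * x ^ 3))).
  apply Rsqr_inj; [nra | apply Rabs_pos |].
  rewrite <- Rsqr_abs, !Rsqr_pow2.
  replace ((2 * sqrt x * sqrt ((1 + x ^ 3) / (1 - 8 * x ^ 3))) ^ 2)
    with (4 * sqrt x ^ 2 * sqrt ((1 + x ^ 3) / (1 - 8 * x ^ 3)) ^ 2) by ring.
  rewrite Ht2, pow2_sqrt by (apply Rlt_le, Rdiv_lt_0_compat; nra).
  apply (Rmult_eq_reg_r (1 - 8 * x ^ 3)); [|lra].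
  rewrite HS. field. lra.
Qed.

Lemma leaf_int_3_half S :
  exists s, s ^ 2 = leaf3_half_sq S /\ leaf_int 3 S = 2 * leaf_int 3 s.
Proof.
  destruct (leaf3_half_sq_spec S) as [[Hx0 Hx1] _].
  assert (Ht : 0 <= sqrt (leaf3_half_sq S)) by apply sqrt_pos.
  assert (Ht2 : sqrt (leaf3_half_sq S) ^ 2 = leaf3_half_sq S) by (apply pow2_sqrt; lra).
  assert (Ht6 : 8 * sqrt (leaf3_half_sq S) ^ 6 < 1)
    by (replace (sqrt (leaf3_half_sq S) ^ 6) with ((sqrt (leaf3_half_sq S) ^ 2) ^ 3) by ring;
        rewrite Ht2; nra).
  pose proof (leaf_int_3_dup _ Ht Ht6) as Hdup. rewrite leaf3_dup_sqrt_half_sq in Hdup.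
  set (t := sqrt (leaf3_half_sq S)) in *.
  destruct (Rle_dec 0 S).
  - exists t. rewrite Rabs_right in Hdup by lra. split; assumption.
  - exists (- t). rewrite Rabs_left, leaf_int_opp in Hdup by lra.
    rewrite leaf_int_opp, <- Ht2. split; [ring | lra].
Qed.

Lemma leaf_int_3_bounded : exists M, forall r, leaf_int 3 r <= M.
Proof.
  exists (2 * leaf_int 3 1). intro r.
  destruct (leaf_int_3_half r) as [s [Hs2 ->]].
  destruct (leaf3_half_sq_spec r) as [[_ Hx] _].
  assert (s < 1) by nra.
  assert (leaf_int 3 s < leaf_int 3 1) by (apply leaf_int_lt; assumption). lra.
Qed.

Theorem mainTheorem16 (l : R) :
  - zeta 3 < l < zeta 3 ->
  let S := sleafh 3 l in
  (sleafh 3 (l / 2)) ^ 2 =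
    - (1/2) * S ^ 2 - (1/2) * sqrt (1 - S ^ 2 + S ^ 4)
    + (1/2) * sqrt (-1 + S ^ 2 + 2 * S ^ 4
                    + (2 + 2 * S ^ 6) / sqrt (1 - S ^ 2 + S ^ 4)).
Proof.
  intros Hl S.
  assert (HS : leaf_int 3 S = l) by exact (leaf_int_sleafh 3 leaf_int_3_bounded l Hl).
  destruct (leaf_int_3_half S) as [s [Hs2 Hs]].
  replace (l / 2) with (leaf_int 3 s) by lra.
  rewrite sleafh_leaf_int. exact Hs2.
Qed.
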